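(* Let $\mathcal{H},\mathcal{K}$ be real or complex Hilbert spaces and let $S:\mathcal{H}\to\mathcal{K}$ and $T:\mathcal{K}\to\mathcal{H}$ be (not necessarily densely defined or closed) linear operators such that $$\operatorname{ran}(S\cap T^* )=\mathcal{K}\qquad\text{and}\qquad \operatorname{ran}(T\cap S^* )=\mathcal{H}.$$ Then $S$ and $T$ are both densely defined operators such that $S^*=T$ and $T^*=S$.
   Context: Linear operators have domains that are linear subspaces and are identified with their graphs, i.e. viewed as linear relations (linear subspaces of the product space). For a linear relation $R\subset\mathcal{H}\times\mathcal{K}$ its adjoint is the closed linear relation $R^*=\{(k',h')\in\mathcal{K}\times\mathcal{H}:\langle k,k'\rangle=\langle h,h'\rangle \text{ for all }(h,k)\in R\}$; for a densely defined operator this is the usual adjoint operator, but in general $R^*$ may be multivalued. $S\cap T^*$ denotes the intersection of the graph of $S$ with the relation $T^*$ (an operator), and $\operatorname{ran}$ denotes the range, i.e. the set of second coordinates. *)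

From HB Require Import structures.
From mathcomp Require Import all_boot all_order all_algebra.
From mathcomp Require Import all_classical all_reals.
From mathcomp Require Export complex.
Set Implicit Arguments. Unset Strict Implicit. Unset Printing Implicit Defensive.
Import Order.TTheory GRing.Theory Num.Theory.
Local Open Scope ring_scope.

Section Hilbert.
Variables (K : numFieldType) (conj : K -> K) (V : lmodType K).

Definition is_inner_product (ip : V -> V -> K) : Prop :=
  [/\ (forall a x y z, ip (a *: x + y) z = a * ip x z + ip y z),
      (forall x y, ip x y = conj (ip y x)),
      (forall x, 0 <= ip x x) &
      (forall x, ip x x = 0 -> x = 0)].

(* completeness w.r.t. the norm ||x|| = sqrt <x,x>
   (we use ||x||^2 = |<x,x>| < e, equivalent to ||x|| < sqrt e) *)
Definition ip_complete (ip : V -> V -> K) : Prop :=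
  forall u : nat -> V,
    (forall e : K, 0 < e -> exists N : nat, forall n m : nat, (N <= n)%N -> (N <= m)%N ->
        `|ip (u n - u m) (u n - u m)| < e) ->
    exists x : V, forall e : K, 0 < e -> exists N : nat, forall n : nat, (N <= n)%N ->
        `|ip (u n - x) (u n - x)| < e.

Definition hilbert (ip : V -> V -> K) : Prop := is_inner_product ip /\ ip_complete ip.

Definition ip_dense (ip : V -> V -> K) (D : set V) : Prop :=
  forall x : V, forall e : K, 0 < e -> exists2 d, D d & `|ip (x - d) (x - d)| < e.
End Hilbert.

(* A linear operator V -> W: a linear subspace D (domain) and a map S that is
   linear on D; its graph is {(x, S x) | x in D} (values off D are irrelevant). *)
Definition linear_operator (K : numFieldType) (V W : lmodType K)
    (D : set V) (S : V -> W) : Prop :=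
  D 0 /\ forall a x y, D x -> D y -> D (a *: x + y) /\ S (a *: x + y) = a *: S x + S y.

(* (x', y') in V x W belongs to the adjoint relation T^* of the operator
   T : W -> V with domain DT (graph {(k, T k) | k in DT} in W x V):
   <T k, x'> = <k, y'> for all k in DT. *)
Definition in_adjoint (K : numFieldType) (V W : lmodType K)
    (ipV : V -> V -> K) (ipW : W -> W -> K) (DT : set W) (T : W -> V)
    (x' : V) (y' : W) : Prop :=
  forall k, DT k -> ipV (T k) x' = ipW k y'.

From HB Require Import structures.
From mathcomp Require Import all_boot all_order all_algebra.
From mathcomp Require Import all_classical all_reals.
From mathcomp Require Import complex.
From mathcomp Require Import ring lra.
Import Order.TTheory GRing.Theory Num.Theory.
Local Open Scope ring_scope.
Set Implicit Arguments. Unset Strict Implicit. Unset Printing Implicit Defensive.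

(* Every h is T y for some (y, h) in S^*, so <h, g> = <S g, y> = 0 for g in
   ker S: S is injective, and since S ∩ T^* already has full range, S ⊂ T^*.
   As S is onto, S^* is single-valued; since every h is attained by T ∩ S^*,
   this gives S^* ⊂ T.  Hence S^* = T and, symmetrically, T^* = S.
   If z ⊥ dom S then (0, z) ∈ S^* = T, so z = T 0 = 0.  A subspace with trivial
   orthogonal complement in a Hilbert space is dense: a minimizing sequence
   for the distance from x to it converges to some p, and x - p is orthogonal
   to the subspace.  The complex case reduces to the real one through the real
   inner product Re <.,.>. *)

Section InnerProduct.
Variables (K : numFieldType) (conj : K -> K) (V : lmodType K) (ip : V -> V -> K).
Hypothesis ipP : is_inner_product conj ip.

Lemma ipDl x y z : ip (x + y) z = ip x z + ip y z.
Proof. by case: ipP => lin _ _ _; rewrite -{1}[x]scale1r lin mul1r. Qed.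

Lemma ip0l z : ip 0 z = 0.
Proof. by apply: (addrI (ip 0 z)); rewrite -ipDl !addr0. Qed.

Lemma ipZl a x z : ip (a *: x) z = a * ip x z.
Proof. by case: ipP => lin _ _ _; rewrite -[a *: x]addr0 lin ip0l addr0. Qed.

Lemma ipNl x z : ip (- x) z = - ip x z.
Proof. by rewrite -scaleN1r ipZl mulN1r. Qed.

Lemma ipBl x y z : ip (x - y) z = ip x z - ip y z.
Proof. by rewrite ipDl ipNl. Qed.

Lemma ipC x y : ip x y = conj (ip y x).
Proof. by case: ipP. Qed.

Lemma ip0r x : ip x 0 = 0.
Proof. by have := ipC 0 0; rewrite (ipC x) !ip0l => <-. Qed.

Lemma ip_ge0 x : 0 <= ip x x.
Proof. by case: ipP. Qed.

Lemma ip_eq0 x : ip x x = 0 -> x = 0.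
Proof. by case: ipP => _ _ _; apply. Qed.

Definition orthogonal_trivial (D : set V) :=
  forall z, (forall h, D h -> ip h z = 0) -> z = 0.

Definition ip_cvg (u : nat -> V) (x : V) := forall e, 0 < e ->
  exists N, forall n, (N <= n)%N -> `|ip (u n - x) (u n - x)| < e.

End InnerProduct.

Definition subspace (K : numFieldType) (V : lmodType K) (D : set V) :=
  D 0 /\ forall a x y, D x -> D y -> D (a *: x + y).

Section LinearOperator.
Variables (K : numFieldType) (V W : lmodType K) (D : set V) (S : V -> W).
Hypothesis LS : linear_operator D S.

Lemma linear_operator_subspace : subspace D.
Proof. by case: LS => D0 lin; split=> // a x y Dx Dy; case: (lin a x y Dx Dy). Qed.

Lemma linear_operator0 : S 0 = 0.
Proof.
case: LS => D0 lin; have [_] := lin 1 0 0 D0 D0; rewrite !scale1r addr0 => S00.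
by apply: (addrI (S 0)); rewrite -S00 addr0.
Qed.

Lemma linear_operatorB x y : D x -> D y -> D (x - y) /\ S (x - y) = S x - S y.
Proof.
case: LS => _ lin Dx Dy; have [DxBy SxBy] := lin (-1) y x Dy Dx.
by rewrite addrC -scaleN1r; split=> //; rewrite SxBy scaleN1r addrC.
Qed.

End LinearOperator.

Section Adjoint.
Variables (K : numFieldType) (conj : K -> K) (H W : lmodType K).
Variables (ipH : H -> H -> K) (ipW : W -> W -> K).
Hypotheses (ipHP : is_inner_product conj ipH) (ipWP : is_inner_product conj ipW).
Variables (DS : set H) (S : H -> W) (DT : set W) (T : W -> H).

Lemma adjoint_functional : (forall y, exists2 x, DS x & S x = y) ->
  forall k1 k2 h', in_adjoint ipW ipH DS S k1 h' -> in_adjoint ipW ipH DS S k2 h' ->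
  k1 = k2.
Proof.
move=> ontoS k1 k2 h' adj1 adj2; apply/subr0_eq/(ip_eq0 ipWP).
have [g Dg Sg] := ontoS (k1 - k2).
by rewrite -{2}Sg (ipBl ipWP) (ipC ipWP k1) (ipC ipWP k2) adj1 // adj2 // subrr.
Qed.

Lemma adjoint_onto_ker0 : (forall x, exists k, in_adjoint ipW ipH DS S k x) ->
  forall g, DS g -> S g = 0 -> g = 0.
Proof.
move=> onto g Dg Sg0; apply: (ip_eq0 ipHP); have [k adj] := onto g.
by rewrite -adj // Sg0 (ip0l ipWP).
Qed.

Lemma graph_sub_adjoint : linear_operator DS S ->
  (forall y, exists2 x, DS x & S x = y /\ in_adjoint ipH ipW DT T x (S x)) ->
  (forall g, DS g -> S g = 0 -> g = 0) ->
  forall h, DS h -> in_adjoint ipH ipW DT T h (S h).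
Proof.
move=> LS ontoST ker0 h Dh; have [x Dx [Sxh adj]] := ontoST (S h).
have [DhBx ShBx] := linear_operatorB LS Dh Dx.
suff /subr0_eq -> : h - x = 0 by [].
by apply: ker0; rewrite // ShBx Sxh subrr.
Qed.

Lemma adjoint_sub_graph : (forall y, exists2 x, DS x & S x = y) ->
  (forall x, exists2 y, DT y & T y = x /\ in_adjoint ipW ipH DS S y (T y)) ->
  forall k' h', in_adjoint ipW ipH DS S k' h' -> DT k' /\ h' = T k'.
Proof.
move=> ontoS ontoTS k' h'; have [y Dy [<- adjy]] := ontoTS h' => adj.
by rewrite (adjoint_functional ontoS adj adjy).
Qed.

Lemma adjoint_graph_orthogonal : linear_operator DT T ->
  (forall k' h', in_adjoint ipW ipH DS S k' h' <-> DT k' /\ h' = T k') ->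
  orthogonal_trivial ipH DS.
Proof.
move=> LT adjE z zperp; have [_ ->] : DT 0 /\ z = T 0.
  by apply/adjE => h Dh; rewrite (ip0r ipWP) zperp.
exact: linear_operator0 LT.
Qed.

End Adjoint.

Section AdjointPair.
Variables (K : numFieldType) (conj : K -> K) (H W : lmodType K).
Variables (ipH : H -> H -> K) (ipW : W -> W -> K).
Hypotheses (ipHP : is_inner_product conj ipH) (ipWP : is_inner_product conj ipW).
Variables (DS : set H) (S : H -> W) (DT : set W) (T : W -> H).
Hypotheses (LS : linear_operator DS S) (LT : linear_operator DT T).
Hypothesis ontoST :
  forall y, exists2 x, DS x & S x = y /\ in_adjoint ipH ipW DT T x (S x).
Hypothesis ontoTS :
  forall x, exists2 y, DT y & T y = x /\ in_adjoint ipW ipH DS S y (T y).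

Let ontoS y : exists2 x, DS x & S x = y.
Proof. by have [x Dx [Sx _]] := ontoST y; exists x. Qed.

Let ontoT x : exists2 y, DT y & T y = x.
Proof. by have [y Dy [Ty _]] := ontoTS x; exists y. Qed.

Let kerS0 : forall g, DS g -> S g = 0 -> g = 0.
Proof.
by apply: (adjoint_onto_ker0 ipHP ipWP) => x; have [y _ [<- ?]] := ontoTS x; exists y.
Qed.

Let kerT0 : forall g, DT g -> T g = 0 -> g = 0.
Proof.
by apply: (adjoint_onto_ker0 ipWP ipHP) => y; have [x _ [<- ?]] := ontoST y; exists x.
Qed.

Lemma adjoint_eq_graphl k' h' :
  in_adjoint ipW ipH DS S k' h' <-> DT k' /\ h' = T k'.
Proof.
split; first exact: (adjoint_sub_graph ipWP ontoS ontoTS).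
by case=> Dk ->; exact: (graph_sub_adjoint LT ontoTS kerT0 Dk).
Qed.

Lemma adjoint_eq_graphr h' k' :
  in_adjoint ipH ipW DT T h' k' <-> DS h' /\ k' = S h'.
Proof.
split; first exact: (adjoint_sub_graph ipHP ontoT ontoST).
by case=> Dh ->; exact: (graph_sub_adjoint LS ontoST kerS0 Dh).
Qed.

Lemma adjoint_pair_orthogonal :
  orthogonal_trivial ipH DS /\ orthogonal_trivial ipW DT.
Proof.
split; first exact: (adjoint_graph_orthogonal ipWP LT adjoint_eq_graphl).
exact: (adjoint_graph_orthogonal ipHP LS adjoint_eq_graphr).
Qed.

End AdjointPair.

Lemma invS_lt_eventually (R : archiRealFieldType) (e : R) : 0 < e ->
  exists N, forall n, (N <= n)%N -> n.+1%:R^-1 < e.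
Proof.
move=> e0; exists (Num.Def.archi_bound e^-1) => n Nn.
rewrite -[e]invrK ltf_pV2 ?posrE ?invr_gt0 //.
apply: (lt_le_trans (archi_boundP _)); first by rewrite invr_ge0 ltW.
by rewrite ler_nat leqW.
Qed.

Lemma quadratic_le (R : realFieldType) (a b e : R) : 0 <= b ->
  (forall t, 2 * t * a - t ^+ 2 * b <= e) -> a ^+ 2 <= (b + 1) * e.
Proof.
move=> b0 le_e; have b1 : 0 < b + 1 by lra.
have := le_e (a / (b + 1)); set s := a / (b + 1).
have -> : a = s * (b + 1) by rewrite /s mulfVK // gt_eqF.
move=> /(ler_wpM2l (ltW b1)) key.
have := mulr_ge0 (sqr_ge0 s) (ltW b1); nra.
Qed.

Section RealInnerProduct.
Variables (R : realType) (V : lmodType R) (ip : V -> V -> R).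
Hypothesis ipP : is_inner_product id ip.
Local Notation sqn x := (ip x x).

Let ipCr x y : ip x y = ip y x.
Proof. by rewrite (ipC ipP). Qed.

Lemma ipDr (x y z : V) : ip z (x + y) = ip z x + ip z y.
Proof. by rewrite ipCr (ipDl ipP) (ipCr x) (ipCr y). Qed.

Lemma ipZr (a : R) (x z : V) : ip z (a *: x) = a * ip z x.
Proof. by rewrite ipCr (ipZl ipP) ipCr. Qed.

Lemma ipBr (x y z : V) : ip z (x - y) = ip z x - ip z y.
Proof. by rewrite ipCr (ipBl ipP) (ipCr x) (ipCr y). Qed.

Lemma sqnN (v : V) : sqn (- v) = sqn v.
Proof. by rewrite (ipNl ipP) -scaleN1r ipZr mulN1r opprK. Qed.

Lemma sqn_sub_scale (a h : V) (t : R) :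
  sqn (a - t *: h) = sqn a - 2 * t * ip a h + t ^+ 2 * sqn h.
Proof. by rewrite (ipBl ipP) !ipBr !(ipZl ipP) !ipZr (ipCr h a); ring. Qed.

Lemma parallelogram (a b : V) : sqn (a + b) + sqn (a - b) = 2 * sqn a + 2 * sqn b.
Proof. by rewrite (ipDl ipP) (ipBl ipP) !ipBr !ipDr (ipCr b a); ring. Qed.

Lemma ip_sqr_le (w h : V) : ip w h ^+ 2 <= (sqn h + 1) * sqn w.
Proof.
apply: quadratic_le (ip_ge0 ipP h) _ => t.
by have := ip_ge0 ipP (w - t *: h); rewrite sqn_sub_scale; lra.
Qed.

Section Minimizing.
Variables (D : set V) (x : V) (ds : nat -> V).
Hypothesis DP : subspace D.
Hypothesis ds_in : forall n, D (ds n).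
Hypothesis ds_min : forall n d, D d -> sqn (x - ds n) < sqn (x - d) + n.+1%:R^-1.

Lemma minimizing_cauchy n m :
  sqn (ds n - ds m) <= 2 * n.+1%:R^-1 + 2 * m.+1%:R^-1.
Proof.
set mid := 2^-1 *: (ds n + ds m).
have Dmid : D mid.
  case: DP => D0 DL; rewrite /mid -[_ *: _]addr0 -[ds n]scale1r.
  by apply: (DL) => //; apply: DL.
have sum_mid : (x - ds m) + (x - ds n) = 2 *: (x - mid).
  rewrite scalerBr scalerA divff ?pnatr_eq0 // scale1r scaler_nat mulr2n.
  by rewrite addrACA -opprD (addrC (ds m)).
have diff : (x - ds m) - (x - ds n) = ds n - ds m.
  by rewrite opprB addrC addrA subrK.
have := parallelogram (x - ds m) (x - ds n).
rewrite sum_mid diff (ipZl ipP) ipZr.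
have := ds_min n Dmid; have := ds_min m Dmid.
move: (n.+1%:R^-1) (m.+1%:R^-1) => a b; lra.
Qed.

Lemma minimizing_ip_sqr_le h n : D h ->
  ip (x - ds n) h ^+ 2 <= (sqn h + 1) * n.+1%:R^-1.
Proof.
move=> Dh; apply: quadratic_le (ip_ge0 ipP h) _ => t.
have Dth : D (t *: h + ds n) by case: DP => _; apply.
have := ds_min n Dth.
rewrite opprD addrA addrAC sqn_sub_scale.
move: (n.+1%:R^-1) => a; lra.
Qed.

Lemma minimizing_limit_orthogonal p : ip_cvg ip ds p ->
  forall h, D h -> ip h (x - p) = 0.
Proof.
move=> ds_p h Dh; rewrite ipCr.
(* [c] is the limit of [ip (x - ds n) h], which [minimizing_ip_sqr_le] forces to 0. *)
set c := ip (x - p) h; set M := sqn h + 1.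
have M0 : 0 < M by have := ip_ge0 ipP h; rewrite /M; lra.
have c_bound n : c ^+ 2 <= 2 * M * (n.+1%:R^-1 + sqn (ds n - p)).
  have -> : c = ip (x - ds n) h + ip (ds n - p) h.
    by rewrite -(ipDl ipP) addrA subrK.
  have := minimizing_ip_sqr_le n Dh; have := ip_sqr_le (ds n - p) h.
  rewrite -/M; move: (ip (x - ds n) h) (ip (ds n - p) h) => a g.
  move: n.+1%:R^-1 (sqn (ds n - p)) => eps d ga ab.
  by have := sqr_ge0 (a - g); nra.
suff c2 : c ^+ 2 <= 0 by apply/eqP; rewrite -sqrf_eq0 eq_le c2 sqr_ge0.
apply/ler_addgt0Pr => e e0; rewrite add0r.
set f := e / (4 * M).
have f0 : 0 < f by rewrite divr_gt0 // mulr_gt0.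
have Mf : 4 * M * f = e by rewrite mulrC mulfVK // gt_eqF ?mulr_gt0.
have [N1 HN1] := ds_p f f0; have [N2 HN2] := invS_lt_eventually f0.
have := HN1 _ (leq_maxl N1 N2); have := HN2 _ (leq_maxr N1 N2).
have := c_bound (maxn N1 N2); rewrite ger0_norm ?(ip_ge0 ipP) //.
move: (maxn N1 N2).+1%:R^-1 (sqn (ds (maxn N1 N2) - p)) => a b; nra.
Qed.

End Minimizing.

Lemma exists_minimizing (D : set V) x : D 0 -> exists ds : nat -> V,
  (forall n, D (ds n)) /\
  (forall n d, D d -> sqn (x - ds n) < sqn (x - d) + n.+1%:R^-1).
Proof.
move=> D0; pose A : set R := [set sqn (x - d) | d in D]%classic.
have lbA : has_lbound A by exists 0 => _ [d _ <-]; exact: (ip_ge0 ipP (x - d)).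
have infA : has_inf A by split=> //; exists (sqn (x - 0)); exists 0.
have near n : exists d, D d /\ sqn (x - d) < inf A + n.+1%:R^-1.
  have eps : 0 < n.+1%:R^-1 :> R by rewrite invr_gt0.
  by have [_ [d Dd <-] lt] := inf_adherent eps infA; exists d.
have [ds dsP] := choice near; exists ds; split=> [n | n d Dd].
  exact: (dsP n).1.
apply: (lt_le_trans (dsP n).2); rewrite lerD2r.
by apply: (ge_inf lbA); exists d.
Qed.

Theorem ip_dense_real (D : set V) :
  ip_complete ip -> subspace D -> orthogonal_trivial ip D -> ip_dense ip D.
Proof.
move=> ipc DP Dperp x e e0.
have [ds [ds_in ds_min]] := exists_minimizing x DP.1.
have [p ds_p] : exists p, ip_cvg ip ds p.
  apply: ipc => e1 e10.
  have [N HN] := invS_lt_eventually (divr_gt0 e10 (ltr0Sn R 3)).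
  exists N => n m Nn Nm; rewrite ger0_norm ?(ip_ge0 ipP) //.
  have := minimizing_cauchy DP ds_in ds_min n m.
  have := HN n Nn; have := HN m Nm; move: n.+1%:R^-1 m.+1%:R^-1 => a b; lra.
have px : p = x.
  apply/esym/subr0_eq/Dperp => h Dh.
  exact: (minimizing_limit_orthogonal DP ds_in ds_min ds_p Dh).
have [N HN] := ds_p e e0; exists (ds N) => //.
by rewrite -sqnN opprB -px; exact: HN.
Qed.

End RealInnerProduct.

Lemma normc_ge0_ltE (R : realType) (w e : R[i]) : 0 <= w -> 0 < e ->
  (`|w| < e) = (complex.Re w < complex.Re e).
Proof.
by move=> w0 e0; rewrite ger0_norm // ltcE (ger0_Im w0) (ger0_Im (ltW e0)) eqxx.
Qed.

Lemma gtc0_Re (R : realType) (e : R[i]) : 0 < e -> 0 < complex.Re e.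
Proof. by rewrite ltcE => /andP[]. Qed.

Section Realify.
Variables (R : realType) (V : lmodType R[i]).

Definition realify : Type := V.
HB.instance Definition _ := GRing.Zmodule.on realify.

Definition realify_scale (a : R) (v : realify) : realify := (a%:C)%C *: (v : V).

Lemma realify_scaleA a b v :
  realify_scale a (realify_scale b v) = realify_scale (a * b) v.
Proof. by rewrite /realify_scale scalerA rmorphM. Qed.

Lemma realify_scale1 : left_id 1 realify_scale.
Proof. by move=> v; rewrite /realify_scale rmorph1 scale1r. Qed.

Lemma realify_scaleDr : right_distributive realify_scale +%R.
Proof. by move=> a u v; rewrite /realify_scale scalerDr. Qed.

Lemma realify_scaleDl v : {morph realify_scale^~ v : a b / a + b}.
Proof. by move=> a b; rewrite /realify_scale rmorphD scalerDl. Qed.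

HB.instance Definition _ := GRing.Zmodule_isLmodule.Build R realify
  realify_scaleA realify_scale1 realify_scaleDr realify_scaleDl.

Lemma realify_subspace (D : set V) : subspace D -> subspace (D : set realify).
Proof. by case=> D0 DL; split=> // a x y; exact: DL. Qed.

Variables (ip : V -> V -> R[i]).
Hypothesis ipP : is_inner_product Num.conj ip.

Definition re_ip (u v : realify) : R := complex.Re (ip u v).

Lemma re_ip_ge0 x : 0 <= re_ip x x.
Proof. by have := ip_ge0 ipP x; rewrite lecE => /andP[]. Qed.

Lemma re_ip_inner_product : is_inner_product id re_ip.
Proof.
case: ipP => lin ipC ip_ge0 ip_eq0; split.
- move=> a x y z; rewrite /re_ip /= lin.
  by case: (ip x z) (ip y z) => [u1 u2] [v1 v2]; rewrite /= mul0r subr0.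
- by move=> x y; rewrite /re_ip ipC; case: (ip y x).
- exact: re_ip_ge0.
- move=> x; rewrite /re_ip => rex0; apply: ip_eq0.
  have := ip_ge0 x; rewrite lecE => /andP[/eqP imx _].
  by apply/eqP; rewrite eq_complex rex0 -imx /= !eqxx.
Qed.

Lemma re_ip_normE x (e : R[i]) : 0 < e ->
  (`|ip x x| < e) = (`|re_ip x x| < complex.Re e).
Proof. by move=> e0; rewrite normc_ge0_ltE ?(ip_ge0 ipP) // ger0_norm ?re_ip_ge0. Qed.

Lemma re_ip_complete : ip_complete ip -> ip_complete re_ip.
Proof.
move=> ipc u u_cauchy; have [x u_x] : exists x, ip_cvg ip u x.
  apply: ipc => e e0; have [N HN] := u_cauchy _ (gtc0_Re e0).
  by exists N => n m Nn Nm; rewrite re_ip_normE // HN.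
exists x => e e0; have eC : 0 < (e%:C)%C by rewrite ltcR.
by have [N HN] := u_x _ eC; exists N => n Nn; rewrite -(re_ip_normE _ eC) HN.
Qed.

Lemma re_ip_orthogonal (D : set V) :
  subspace D -> orthogonal_trivial ip D -> orthogonal_trivial re_ip D.
Proof.
move=> [D0 DL] Dperp z zperp; apply: Dperp => h Dh.
have Dih : D ('i%C *: h) by rewrite -[_ *: h]addr0; exact: DL.
move: (zperp h Dh) (zperp _ Dih); rewrite /re_ip (ipZl ipP).
case: (ip h z) => a b /= ->; rewrite !mul0r mul1r sub0r.
by move=> /eqP; rewrite oppr_eq0 => /eqP ->.
Qed.

End Realify.

Theorem ip_dense_complex (R : realType) (V : lmodType R[i]) (ip : V -> V -> R[i])
  (D : set V) :
  hilbert Num.conj ip -> subspace D -> orthogonal_trivial ip D -> ip_dense ip D.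
Proof.
move=> [ipP ipc] DP Dperp x e e0.
have := ip_dense_real (re_ip_inner_product ipP) (re_ip_complete ipP ipc)
  (realify_subspace DP) (re_ip_orthogonal ipP DP Dperp).
by move=> /(_ x _ (gtc0_Re e0)) [d Dd lt]; exists d; rewrite // re_ip_normE.
Qed.

Theorem proposition3p4 (R : realType) :
  (forall (H Kk : lmodType R) (ipH : H -> H -> R) (ipK : Kk -> Kk -> R)
          (DS : set H) (S : H -> Kk) (DT : set Kk) (T : Kk -> H),
     hilbert id ipH -> hilbert id ipK ->
     linear_operator DS S -> linear_operator DT T ->
     (forall y : Kk, exists2 x, DS x & S x = y /\ in_adjoint ipH ipK DT T x (S x)) ->
     (forall x : H, exists2 y, DT y & T y = x /\ in_adjoint ipK ipH DS S y (T y)) ->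
     [/\ ip_dense ipH DS, ip_dense ipK DT,
         (forall k' h', in_adjoint ipK ipH DS S k' h' <-> DT k' /\ h' = T k') &
         (forall h' k', in_adjoint ipH ipK DT T h' k' <-> DS h' /\ k' = S h')]) /\
  (forall (H Kk : lmodType R[i]) (ipH : H -> H -> R[i]) (ipK : Kk -> Kk -> R[i])
          (DS : set H) (S : H -> Kk) (DT : set Kk) (T : Kk -> H),
     hilbert Num.conj ipH -> hilbert Num.conj ipK ->
     linear_operator DS S -> linear_operator DT T ->
     (forall y : Kk, exists2 x, DS x & S x = y /\ in_adjoint ipH ipK DT T x (S x)) ->
     (forall x : H, exists2 y, DT y & T y = x /\ in_adjoint ipK ipH DS S y (T y)) ->
     [/\ ip_dense ipH DS, ip_dense ipK DT,
         (forall k' h', in_adjoint ipK ipH DS S k' h' <-> DT k' /\ h' = T k') &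
         (forall h' k', in_adjoint ipH ipK DT T h' k' <-> DS h' /\ k' = S h')]).
Proof.
split=> H W ipH ipW DS S DT T hH hW LS LT ontoST ontoTS;
  have [DSperp DTperp] := adjoint_pair_orthogonal hH.1 hW.1 LS LT ontoST ontoTS;
  have DSsub := linear_operator_subspace LS; have DTsub := linear_operator_subspace LT;
  split.
- exact: (ip_dense_real hH.1 hH.2 DSsub DSperp).
- exact: (ip_dense_real hW.1 hW.2 DTsub DTperp).
- exact: (adjoint_eq_graphl hH.1 hW.1 LT ontoST ontoTS).
- exact: (adjoint_eq_graphr hH.1 hW.1 LS ontoST ontoTS).
- exact: (ip_dense_complex hH DSsub DSperp).
- exact: (ip_dense_complex hW DTsub DTperp).
- exact: (adjoint_eq_graphl hH.1 hW.1 LT ontoST ontoTS).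
- exact: (adjoint_eq_graphr hH.1 hW.1 LS ontoST ontoTS).
Qed.
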